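(* Let $G=(V,E)$ be a graph with a partition $(V_1,V_2)$ of $V$ such that $G[V_1]$ and $G[V_2]$ are $P_5$-free, and let $k$ be an integer. Suppose that: $k\ge 1$; $G$ contains a $P_5$; every vertex of $G$ lies on some $P_5$ in $G$; every $P_5$ in $G$ contains at least $4$ vertices of $V_2$; and there is no vertex $v\in V_2$ that is isolated in $G[V_2]$ and for which there is a path $(v,w,x,y,z)$ in $G$ with $w\in V_1$. Then $G[V_2]$ has no isolated vertices.
   Context: Graphs are finite, simple and undirected. A $P_5$ is a path on $5$ vertices (as a not necessarily induced subgraph), written as the sequence of its vertices; a graph is $P_5$-free if it contains no $P_5$. $G[X]$ denotes the subgraph induced by $X$. *)

From mathcomp Require Import all_boot.
Set Implicit Arguments. Unset Strict Implicit. Unset Printing Implicit Defensive.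

Definition simple_graph (T : finType) (e : rel T) : Prop :=
  symmetric e /\ irreflexive e.

(* (a,b,c,d,f) is a P5 in G: five distinct vertices, consecutive ones adjacent
   (not necessarily induced). *)
Definition is_P5 (T : finType) (e : rel T) (a b c d f : T) : bool :=
  uniq [:: a; b; c; d; f] && [&& e a b, e b c, e c d & e d f].

Definition has_P5 (T : finType) (e : rel T) : Prop :=
  exists a b c d f, is_P5 e a b c d f.

(* G[X] is P5-free: no P5 of G with all vertices in X (the edges of G[X]
   are exactly the edges of G between vertices of X). *)
Definition P5_free_in (T : finType) (e : rel T) (X : {set T}) : Prop :=
  forall a b c d f, is_P5 e a b c d f ->
    ~~ all (fun x => x \in X) [:: a; b; c; d; f].

Definition isolated_in (T : finType) (e : rel T) (X : {set T}) (v : T) : Prop :=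
  v \in X /\ forall u, u \in X -> ~~ e v u.

From mathcomp Require Import all_boot.
Set Implicit Arguments. Unset Strict Implicit. Unset Printing Implicit Defensive.

(* All neighbours of a vertex v that is isolated in G[V2] lie in V1.  Take a
   P5 through v.  If v is an inner vertex of it, its two neighbours on the path
   lie in V1, so the path has at most 3 vertices in V2.  If v is an end vertex,
   read the path starting from v: its second vertex lies in V1, which is
   excluded by hypothesis.  Of the remaining hypotheses only V1 :|: V2 = setT
   is needed. *)

Section IsolatedOnP5.

Variables (T : finType) (e : rel T).
Hypothesis esym : symmetric e.

Lemma is_P5_rev a b c d f : is_P5 e a b c d f -> is_P5 e f d c b a.
Proof.
case/andP=> uniq_path /and4P[eab ebc ecd edf].
apply/andP; split; first by rewrite -rev_uniq.
by rewrite [e f d]esym [e d c]esym [e c b]esym [e b a]esym edf ecd ebc eab.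
Qed.

Variable X : {set T}.

Lemma isolated_in_nbr v u : isolated_in e X v -> e u v -> u \notin X.
Proof.
case=> _ iso euv; apply/negP=> uX.
by move: (iso u uX); rewrite esym euv.
Qed.

Lemma isolated_in_P5_second a b c d f :
  isolated_in e X b -> is_P5 e a b c d f ->
  count (fun x => x \in X) [:: a; b; c; d; f] <= 3.
Proof.
move=> isob /andP[_ /and4P[eab ebc _ _]].
have aX := isolated_in_nbr isob eab.
have cX : c \notin X by apply: isolated_in_nbr isob _; rewrite esym.
by rewrite /= (negbTE aX) (negbTE cX); case: (b \in X); case: (d \in X); case: (f \in X).
Qed.

Lemma isolated_in_P5_inner a b c d f v :
  isolated_in e X v -> is_P5 e a b c d f -> v \in [:: b; c; d] ->
  count (fun x => x \in X) [:: a; b; c; d; f] <= 3.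
Proof.
move=> isov P; rewrite !inE; case/or3P=> /eqP vE; subst v.
- exact: isolated_in_P5_second isov P.
- move: P => /andP[_ /and4P[_ ebc ecd _]].
  have bX : b \notin X by exact: isolated_in_nbr isov ebc.
  have dX : d \notin X by apply: isolated_in_nbr isov _; rewrite esym.
  by rewrite /= (negbTE bX) (negbTE dX); case: (a \in X); case: (c \in X); case: (f \in X).
- rewrite -count_rev; exact: isolated_in_P5_second isov (is_P5_rev P).
Qed.

Lemma isolated_in_P5_end a b c d f v :
  isolated_in e X v -> is_P5 e a b c d f -> v \in [:: a; f] ->
  exists w x y z, is_P5 e v w x y z /\ w \notin X.
Proof.
move=> isov P; rewrite !inE; case/orP=> /eqP vE; subst v.
- exists b, c, d, f; split=> //; apply: isolated_in_nbr isov _.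
  by move: P => /andP[_ /and4P[eab _ _ _]]; rewrite esym.
- exists d, c, b, a; split; first exact: is_P5_rev.
  by move: P => /andP[_ /and4P[_ _ _ edf]]; exact: isolated_in_nbr isov edf.
Qed.

End IsolatedOnP5.

Theorem lemma4 (T : finType) (e : rel T) (V1 V2 : {set T}) (k : nat) :
  simple_graph e ->
  V1 :&: V2 = set0 -> V1 :|: V2 = setT ->
  P5_free_in e V1 -> P5_free_in e V2 ->
  1 <= k ->
  has_P5 e ->
  (forall v : T, exists a b c d f, is_P5 e a b c d f /\ v \in [:: a; b; c; d; f]) ->
  (forall a b c d f, is_P5 e a b c d f ->
     4 <= count (fun x => x \in V2) [:: a; b; c; d; f]) ->
  ~ (exists v, isolated_in e V2 v /\
       exists w x y z, is_P5 e v w x y z /\ w \in V1) ->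
  forall v, ~ isolated_in e V2 v.
Proof.
move=> [esym _] _ V12 _ _ _ _ on_P5 P5_V2 no_end v isov.
have [a [b [c [d [f [P vP]]]]]] := on_P5 v.
have [v_end | v_inner] : v \in [:: a; f] \/ v \in [:: b; c; d].
  move: vP; rewrite !inE.
  by case: (v == a); case: (v == f); rewrite /= ?orbF; [left|left|left|right].
- have [w [x [y [z [P' wV2]]]]] := isolated_in_P5_end esym isov P v_end.
  apply: no_end; exists v; split=> //; exists w, x, y, z; split=> //.
  have : w \in V1 :|: V2 by rewrite V12 inE.
  by rewrite inE (negbTE wV2) orbF.
- have := P5_V2 _ _ _ _ _ P.
  by rewrite leqNgt ltnS (isolated_in_P5_inner esym isov P v_inner).
Qed.
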